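(* Let $(V,E,c,p)$ be a PCSTP instance with $s:=|T_p|\ge 3$, let $H$ be a terminal-regions decomposition, and enumerate $T_p=\{t_1,\dots,t_s\}$ so that $r^{pc}_H(t_1)\le\dots\le r^{pc}_H(t_s)$. Let $v_i\in V\setminus T_p$. If there is an optimal solution $S$ in which $v_i$ has degree at least $3$, then $$C(S)\ \ge\ \underline{d}(v_i,\bar v_{i,1})+\underline{d}(v_i,\bar v_{i,2})+\underline{d}(v_i,\bar v_{i,3})+\sum_{k=1}^{s-3} r^{pc}_H(t_k).$$
   Context: A PCSTP instance $(V,E,c,p)$: finite undirected connected graph $G=(V,E)$, $c:E\to\mathbb{Q}_{>0}$, $p:V\to\mathbb{Q}_{\ge0}$. For a tree $S\subseteq G$ (connected acyclic subgraph with at least one vertex), $C(S):=\sum_{e\in E(S)}c(e)+\sum_{v\in V\setminus V(S)}p(v)$; an optimal solution is a tree minimizing $C$. $T_p:=\{v\in V:p(v)>0\}$. $d(u,w)$ is the shortest-path distance in $G$ w.r.t. $c$. $\underline{d}(u,w)$ is the shortest-path distance between $u$ and $w$ in the subgraph induced by $V\setminus(T_p\setminus\{u,w\})$ ($+\infty$ if none). For $v_i\in V\setminus T_p$, $\bar v_{i,1},\bar v_{i,2},\dots$ denote the potential terminals ordered by nondecreasing $\underline{d}(v_i,\cdot)$ (ties broken arbitrarily). A terminal-regions decomposition is a partition $H=\{H_t:t\in T_p\}$ of $V$ with $H_t\cap T_p=\{t\}$ and each $H_t$ inducing a connected subgraph. For $t\in T_p$, $r^{pc}_H(t):=\min\{p(t),\min\{d(t,v):v\notin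 H_t\}\}$. *)

From HB Require Import structures.
From mathcomp Require Import all_boot all_order all_algebra.
Set Implicit Arguments. Unset Strict Implicit. Unset Printing Implicit Defensive.
Import Order.TTheory GRing.Theory Num.Theory.
Local Open Scope ring_scope.

Section PCSTP.
Variable V : finType.

(* Edges of the (simple, undirected) graph are 2-element vertex sets. *)
Definition adj (E : {set {set V}}) : rel V := fun x y => [set x; y] \in E.

Definition is_pcstp (E : {set {set V}}) (c : {set V} -> rat) (p : V -> rat) : Prop :=
  [/\ (forall e, e \in E -> #|e| = 2%N),
      (forall e, e \in E -> 0 < c e),
      (forall v, 0 <= p v) &
      (forall u w, connect (adj E) u w)].

Definition Tp (p : V -> rat) : {set V} := [set v | 0 < p v].

(* extended nonnegative values: None = +infinity *)
Definition eadd (x y : option rat) : option rat :=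
  match x, y with Some a, Some b => Some (a + b) | _, _ => None end.
Definition ele (x y : option rat) : bool :=
  match x, y with
  | _, None => true
  | None, Some _ => false
  | Some a, Some b => a <= b
  end.
Definition emin (x y : option rat) : option rat :=
  match x, y with
  | None, _ => y
  | _, None => x
  | Some a, Some b => Some (Num.min a b)
  end.

Definition wcost (c : {set V} -> rat) (x : V) (s : seq V) : rat :=
  \sum_(e <- zip (x :: s) s) c [set e.1; e.2].

Definition is_path (E : {set {set V}}) (A : {set V}) (u : V) (t : seq V) (w : V) : bool :=
  [&& u \in A, all (fun x => x \in A) t, path (adj E) u t, last u t == w & uniq (u :: t)].

Definition dist_in (E : {set {set V}}) (c : {set V} -> rat) (A : {set V}) (u w : V)
  : option rat :=
  \big[emin/None]_(k < #|V|)
     \big[emin/None]_(t : k.-tuple V | is_path E A u t w) Some (wcost c u t).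

Definition dG E c (u w : V) : option rat := dist_in E c [set: V] u w.

(* underline d(u,w): distance in the subgraph induced by V \ (T_p \ {u,w}) *)
Definition dlow E c p (u w : V) : option rat :=
  dist_in E c [set x | (x \notin Tp p) || (x == u) || (x == w)] u w.

Definition is_trd (E : {set {set V}}) (p : V -> rat) (H : V -> {set V}) : Prop :=
  [/\ (forall v, exists t, [/\ t \in Tp p, v \in H t &
                     forall t', t' \in Tp p -> v \in H t' -> t' = t]),
      (forall t, t \in Tp p -> H t :&: Tp p = [set t]) &
      (forall t, t \in Tp p -> forall u w, u \in H t -> w \in H t ->
          connect (fun x y => [&& adj E x y, x \in H t & y \in H t]) u w)].

Definition rpc E c p (H : V -> {set V}) (t : V) : rat :=
  match emin (Some (p t)) (\big[emin/None]_(v | v \notin H t) dG E c t v) with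
  | Some x => x
  | None => p t
  end.

Definition has_cycle (ES : {set {set V}}) : Prop :=
  exists x (s : seq V), [/\ (2 <= size s)%N, uniq (x :: s), path (adj ES) x s &
                            [set last x s; x] \in ES].

Definition is_tree (E : {set {set V}}) (VS : {set V}) (ES : {set {set V}}) : Prop :=
  [/\ ES \subset E, (forall e, e \in ES -> e \subset VS), VS != set0,
      (forall u w, u \in VS -> w \in VS -> connect (adj ES) u w) &
      ~ has_cycle ES].

Definition Cost (c : {set V} -> rat) (p : V -> rat) (VS : {set V}) (ES : {set {set V}}) : rat :=
  \sum_(e in ES) c e + \sum_(v in ~: VS) p v.

Definition optimal E c p VS ES : Prop :=
  is_tree E VS ES /\
  forall VS' ES', is_tree E VS' ES' -> Cost c p VS ES <= Cost c p VS' ES'.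

Definition deg (ES : {set {set V}}) (v : V) : nat := #|[set e in ES | v \in e]|.

Definition enumerates (T : {set V}) (ts : seq V) : Prop := uniq ts /\ ts =i T.

End PCSTP.

From mathcomp Require Import all_boot all_order all_algebra zify lra.
Import Order.TTheory GRing.Theory Num.Theory.
Set Implicit Arguments. Unset Strict Implicit. Unset Printing Implicit Defensive.
Local Open Scope ring_scope.

(* Root the optimal tree at [vi] by breadth-first search. Every child [y] of
   the root spans a branch containing a terminal, since otherwise cutting the
   branch off would give a cheaper tree; let [rep y] be the terminal of that
   branch whose region reaches closest to the root along its tree path. As
   [vi] has degree at least 3, pick three representatives, including the
   terminal whose region contains [vi] if it is one. Each chosen terminal is
   charged its whole path to the root, which meets no other terminal and so
   costs at least its restricted distance to [vi]; every other terminal of the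
   tree is charged its path up to the first vertex outside its region, which
   costs at least its radius. These charged paths are pairwise disjoint, and a
   terminal outside the tree pays its penalty, which also bounds its radius.
   Comparing with the sorted enumerations gives the inequality. *)

Lemma exists_subset_card (T : finType) (A : {set T}) n : (n <= #|A|)%N ->
  exists2 B : {set T}, B \subset A & #|B| = n.
Proof.
move=> nA; exists [set x in take n (enum A)].
  by apply/subsetP => x; rewrite inE => /mem_take; rewrite mem_enum.
rewrite cardsE (card_uniqP _) ?size_takel -?cardE //.
exact/take_uniq/enum_uniq.
Qed.

Lemma exists_subset_card_mem (T : finType) (A : {set T}) x n : (0 < n <= #|A|)%N ->
  exists R : {set T}, [/\ R \subset A, #|R| = n & x \in A -> x \in R].
Proof.
case/andP=> n_gt0 nA; have [xA|xA] := boolP (x \in A); last first.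
  by have [R RA Rn] := exists_subset_card nA; exists R.
have [R RA Rn] : exists2 R : {set T}, R \subset A :\ x & #|R| = n.-1.
  by apply: exists_subset_card; move: nA; rewrite (cardsD1 x A) xA; lia.
have xR : x \notin R by apply/negP => /(subsetP RA); rewrite !inE eqxx.
exists (x |: R); split; rewrite ?setU11 ?cardsU1 ?xR ?Rn //=; last by lia.
by rewrite subUset sub1set xA (subset_trans RA) ?subD1set.
Qed.

Lemma adjC (V : finType) (F : {set {set V}}) : symmetric (adj F).
Proof. by move=> x y; rewrite /adj setUC. Qed.

Lemma set2_eq_cases (T : finType) (a b z w : T) : [set a; b] = [set z; w] ->
  (a = z /\ b = w) \/ (a = w /\ b = z).
Proof.
move=> eq_ab.
have: a \in [set z; w] by rewrite -eq_ab set21.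
have: b \in [set z; w] by rewrite -eq_ab set22.
have: z \in [set a; b] by rewrite eq_ab set21.
have: w \in [set a; b] by rewrite eq_ab set22.
rewrite !inE => wab zab /orP[]/eqP eq_b /orP[]/eqP eq_a; subst a b;
  try by [left | right].
  by move: wab; rewrite orbb => /eqP->; left.
by move: zab; rewrite orbb => /eqP->; left.
Qed.

(** * Extended values and sorted sums *)

Lemma ele_trans b a d : ele a b -> ele b d -> ele a d.
Proof. by case: a; case: b; case: d => //= x y z; apply: le_trans. Qed.

Lemma ele_eminl a b : ele (emin a b) a.
Proof. by case: a; case: b => //= x y; rewrite ?ge_min ?lexx ?orbT. Qed.

Lemma ele_eminr a b : ele (emin a b) b.
Proof. by case: a; case: b => //= x y; rewrite ?ge_min ?lexx ?orbT. Qed.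

Lemma ele_big_emin_seq (I : eqType) (r : seq I) (P : pred I) F i0 :
  i0 \in r -> P i0 -> ele (\big[emin/None]_(i <- r | P i) F i) (F i0).
Proof.
elim: r => [|i r IH] //=; rewrite inE big_cons => /orP[/eqP <-|ir] Pi0.
  by rewrite Pi0 ele_eminl.
case: (P i); last exact: IH.
exact: ele_trans (ele_eminr _ _) (IH ir Pi0).
Qed.

Lemma ele_big_emin (I : finType) (P : pred I) F i0 :
  P i0 -> ele (\big[emin/None]_(i | P i) F i) (F i0).
Proof. by move=> Pi0; apply: ele_big_emin_seq; rewrite ?mem_index_enum. Qed.

(* [eclamp K] is a monotone real-valued surrogate for [option rat] ordered by
   [ele], exact below [K]. *)
Definition eclamp (K : rat) (a : option rat) : rat :=
  if a is Some x then Num.min x K else K.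

Lemma eclamp_mono K a b : ele a b -> eclamp K a <= eclamp K b.
Proof.
case: a b => [x|] [y|] //= xy; rewrite ?le_min ?ge_min ?xy ?lexx ?orbT //.
Qed.

Lemma eclamp_le K a x : ele a (Some x) -> eclamp K a <= x.
Proof. by case: a => //= y yx; rewrite ge_min yx. Qed.

Lemma eclamp_ge0 K a : 0 <= K -> ele (Some 0) a -> 0 <= eclamp K a.
Proof. by case: a => //= x K0 x0; rewrite le_min x0. Qed.

Lemma big_eadd_eclamp (T : Type) (r : seq T) (F : T -> option rat) K :
  0 <= K -> (forall x, ele (Some 0) (F x)) ->
  \sum_(x <- r) eclamp K (F x) < K ->
  \big[eadd/Some 0]_(x <- r) F x = Some (\sum_(x <- r) eclamp K (F x)).
Proof.
move=> K0 F0; elim: r => [|x r IH]; rewrite ?big_nil // !big_cons => ltK.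
have rest0 : 0 <= \sum_(y <- r) eclamp K (F y).
  by apply: sumr_ge0 => y _; apply: eclamp_ge0.
have Fx0 := eclamp_ge0 K0 (F0 x).
rewrite IH; last by move: ltK; lra.
have : eclamp K (F x) < K by move: ltK; lra.
case: (F x) => [y|] /=; last by rewrite ltxx.
by rewrite gt_min ltxx orbF => /ltW yK; rewrite min_l.
Qed.

Lemma sorted_take_sum_le (T : eqType) (f : T -> rat) (s A : seq T) :
  sorted (fun x y => f x <= f y) s -> uniq A -> {subset A <= s} ->
  \sum_(x <- take (size A) s) f x <= \sum_(x <- A) f x.
Proof.
elim: s A => [|x s IH] A /= s_sorted A_uniq As.
  by case: A A_uniq As => [|a A] //= _ As; have := As a (mem_head _ _).
have x_min : all (fun y => f x <= f y) s.
  by apply: (order_path_min _ s_sorted) => a b d /le_trans; apply.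
have {}IH := IH _ (path_sorted s_sorted).
case: (boolP (x \in A)) => xA.
  rewrite (perm_big _ (perm_to_rem xA)) big_cons.
  case: A xA A_uniq As => [|a A] //= xA A_uniq As.
  have -> : size A = size (rem x (a :: A)) by rewrite size_rem.
  rewrite big_cons lerD2l IH ?rem_uniq // => y yr.
  have /As : y \in a :: A by apply: (mem_rem yr).
  by rewrite inE => /orP[/eqP yx|//]; move: yr; rewrite yx mem_rem_uniqF.
case: A xA A_uniq As => [|a A] xA A_uniq As; first by rewrite take0 !big_nil.
case/andP: A_uniq => _ A_uniq.
have {}As : {subset a :: A <= s}.
  move=> y yA; have := As y yA; rewrite inE => /orP[/eqP yx|//].
  by move: xA; rewrite -yx yA.
rewrite /= !big_cons; apply: lerD; first exact/(allP x_min)/As/mem_head.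
by apply: IH => // y yA; apply: As; rewrite inE yA orbT.
Qed.

Lemma ler_sum_subset (I : finType) (A B : {set I}) (F : I -> rat) :
  A \subset B -> (forall x, x \in B -> 0 <= F x) ->
  \sum_(x in A) F x <= \sum_(x in B) F x.
Proof.
move=> AB F0; rewrite [X in _ <= X](big_setID A) /= (setIidPr AB) ler_wpDr //.
by apply: sumr_ge0 => x /setDP[/F0].
Qed.

(* Clamp all values just above the bound and compare the real sums. *)
Lemma ele_big_eadd_take_sorted (T : eqType) (F : T -> option rat) (f : T -> rat)
    (s A : seq T) :
  (forall x, ele (Some 0) (F x)) -> sorted (fun x y => ele (F x) (F y)) s ->
  uniq A -> {subset A <= s} -> (forall x, x \in A -> ele (F x) (Some (f x))) ->
  ele (\big[eadd/Some 0]_(x <- take (size A) s) F x) (Some (\sum_(x <- A) f x)).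
Proof.
move=> F0 s_sorted A_uniq As Ff.
have f0 : 0 <= \sum_(x <- A) f x.
  by rewrite big_seq; apply: sumr_ge0 => x /Ff; exact: ele_trans (F0 x).
set K := \sum_(x <- A) f x + 1.
have sum_le : \sum_(x <- take (size A) s) eclamp K (F x) <= \sum_(x <- A) f x.
  apply: le_trans (sorted_take_sum_le _ A_uniq As) _.
    by apply: sub_sorted s_sorted => x y; apply: eclamp_mono.
  by rewrite !big_seq; apply: ler_sum => x /Ff /eclamp_le.
rewrite (big_eadd_eclamp (K := K)) /= ?sum_le //; first by rewrite /K; lra.
by apply: le_lt_trans sum_le _; rewrite /K; lra.
Qed.

Lemma sum_take_enumerates_le (V : finType) (f : V -> rat) (T R : {set V}) (ts : seq V) :
  enumerates T ts -> sorted (fun x y => f x <= f y) ts -> R \subset T ->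
  \sum_(t <- take (#|T| - #|R|) ts) f t <= \sum_(t in T :\: R) f t.
Proof.
move=> [_ ts_T] ts_sorted RT.
have <- : size (enum (T :\: R)) = (#|T| - #|R|)%N by rewrite -cardE cardsD (setIidPr RT).
rewrite -big_enum; apply: sorted_take_sum_le ts_sorted (enum_uniq _) _ => x.
by rewrite mem_enum ts_T => /setDP[].
Qed.

Lemma big_eadd_take_enumerates_le (V : finType) (F : V -> option rat) (f : V -> rat)
    (T R : {set V}) (bs : seq V) :
  enumerates T bs -> sorted (fun x y => ele (F x) (F y)) bs ->
  (forall x, ele (Some 0) (F x)) -> R \subset T -> (forall t, t \in R -> ele (F t) (Some (f t))) ->
  ele (\big[eadd/Some 0]_(x <- take #|R| bs) F x) (Some (\sum_(t in R) f t)).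
Proof.
move=> [_ bs_T] bs_sorted F0 RT Ff; rewrite -big_enum cardE.
apply: ele_big_eadd_take_sorted bs_sorted (enum_uniq _) _ _ => // x; rewrite mem_enum.
  by rewrite bs_T; apply: (subsetP RT).
exact: Ff.
Qed.

Lemma ele_eadd3 (x y z : option rat) B S C :
  ele (eadd x (eadd y (eadd z (Some 0)))) (Some B) -> B + S <= C ->
  ele (eadd (eadd (eadd x y) z) (Some S)) (Some C).
Proof. by case: x y z => [x|] [y|] [z|] //=; lra. Qed.

(** * Walks and distances *)

Section Walks.
Variable V : finType.
Implicit Types (E : {set {set V}}) (A : {set V}) (c : {set V} -> rat) (w : nat -> V).

Lemma map_iotaS (T : Type) (f : nat -> T) m n :
  [seq f i | i <- iota m.+1 n] = [seq f i.+1 | i <- iota m n].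
Proof. by rewrite -add1n iotaDl -map_comp. Qed.

Lemma path_walk (e : rel V) w k : (forall i, (i < k)%N -> e (w i) (w i.+1)) ->
  path e (w 0%N) [seq w i | i <- iota 1 k].
Proof.
elim: k w => [|k IH] w e_w //=; rewrite e_w // map_iotaS.
by apply: IH => i ik; apply: e_w.
Qed.

Lemma last_walk w k : last (w 0%N) [seq w i | i <- iota 1 k] = w k.
Proof. by elim: k w => [|k IH] w //=; rewrite map_iotaS IH. Qed.

Lemma wcost_walk c w k :
  wcost c (w 0%N) [seq w i | i <- iota 1 k] = \sum_(i < k) c [set w i; w i.+1].
Proof.
elim: k w => [|k IH] w; first by rewrite /wcost big_ord0 big_nil.
by rewrite /wcost /= big_cons big_ord_recl map_iotaS -/(wcost _ _ _) IH.
Qed.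

Lemma wcost_ge0 E c u s : (forall e, e \in E -> 0 < c e) -> path (adj E) u s ->
  0 <= wcost c u s.
Proof.
move=> c_pos; elim: s u => [|x s IH] u /=; first by rewrite /wcost big_nil.
case/andP=> ux xs; rewrite /wcost /= big_cons -/(wcost c x s).
by rewrite addr_ge0 ?IH // ltW ?c_pos.
Qed.

Lemma dist_in_ge0 E c A u v : (forall e, e \in E -> 0 < c e) ->
  ele (Some 0) (dist_in E c A u v).
Proof.
move=> c_pos.
have emin0 a b : ele (Some 0) a -> ele (Some 0) b -> ele (Some 0) (emin a b).
  by case: a b => [a|] [b|] //= a0 b0; rewrite le_min a0.
apply: (big_ind (ele (Some 0))) => // k _; apply: (big_ind (ele (Some 0))) => //.
by move=> t /and5P[_ _ ut _ _]; apply: wcost_ge0 ut.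
Qed.

Lemma dist_in_walk E c A w k :
  (forall i, (i <= k)%N -> w i \in A) ->
  (forall i, (i < k)%N -> adj E (w i) (w i.+1)) ->
  (forall i j, (i <= k)%N -> (j <= k)%N -> w i = w j -> i = j) ->
  ele (dist_in E c A (w 0%N) (w k)) (Some (\sum_(i < k) c [set w i; w i.+1])).
Proof.
move=> wA w_adj w_inj; set s := [seq w i | i <- iota 1 k].
have s_uniq : uniq (w 0%N :: s).
  rewrite -[_ :: s]/(map w (iota 0 k.+1)) map_inj_in_uniq ?iota_uniq //.
  by move=> i j; rewrite !mem_iota !ltnS /= => ik jk; apply: w_inj.
have ltk : (k < #|V|)%N.
  by have := max_card (mem (w 0%N :: s)); rewrite (card_uniqP s_uniq) /= size_map size_iota.
have s_path : is_path E A (w 0%N) s (w k).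
  apply/and5P; split; rewrite ?wA ?path_walk ?last_walk ?eqxx //.
  by apply/allP => x /mapP[i]; rewrite mem_iota add1n => /andP[_ ik] ->; apply: wA.
rewrite -(wcost_walk c w k); apply: ele_trans (ele_big_emin _ (i0 := Ordinal ltk) _) _ => //=.
have sk : size s == k by rewrite size_map size_iota.
exact: (ele_big_emin _ (i0 := Tuple sk)).
Qed.

End Walks.

Lemma rpc_le_dG (V : finType) E c p (H : V -> {set V}) t v b :
  v \notin H t -> ele (dG E c t v) (Some b) -> rpc E c p H t <= b.
Proof.
move=> vH /(ele_trans (ele_big_emin (P := fun w => w \notin H t) (dG E c t) vH)).
by rewrite /rpc; case: (\big[emin/None]_(w | w \notin H t) _) => //= x xb; rewrite ge_min xb orbT.
Qed.

Lemma rpc_le_p (V : finType) E c p (H : V -> {set V}) t : rpc E c p H t <= p t.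
Proof.
by rewrite /rpc; case: (\big[emin/None]_(w | w \notin H t) _) => [x|] /=; rewrite ?ge_min lexx.
Qed.

(** * Breadth-first tree of the optimal solution *)

Section RootedTree.
Variable V : finType.
Variables (ES : {set {set V}}) (VS : {set V}) (vi : V).
Hypothesis ES_card2 : forall e, e \in ES -> #|e| = 2%N.
Hypothesis ES_sub_VS : forall e, e \in ES -> e \subset VS.
Hypothesis VS_connected : forall u w, u \in VS -> w \in VS -> connect (adj ES) u w.
Hypothesis vi_in : vi \in VS.

Lemma adj_in x y : adj ES x y -> (x \in VS) && (y \in VS).
Proof. by move=> /ES_sub_VS /subsetP sub; rewrite !sub // !inE eqxx ?orbT. Qed.

Lemma adj_neq x y : adj ES x y -> x != y.
Proof. by move=> /ES_card2; apply: contra_eq_neq => ->; rewrite setUid cards1. Qed.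

Definition walk_to n x :=
  [exists t : n.-tuple V, path (adj ES) vi t && (last vi t == x)].

Lemma walk_toP n x :
  reflect (exists s, [/\ size s = n, path (adj ES) vi s & last vi s = x]) (walk_to n x).
Proof.
apply: (iffP existsP) => [[t /andP[t_path /eqP t_last]]|[s [sn s_path s_last]]].
  by exists t; rewrite size_tuple.
have sn' : size s == n by rewrite sn.
by exists (Tuple sn'); rewrite /= s_path s_last eqxx.
Qed.

Lemma walk_to0 x : walk_to 0 x = (x == vi).
Proof.
apply/walk_toP/eqP => [[s [sn _ <-]]|->]; last by exists [::].
by case: s sn.
Qed.

Lemma walk_toS n y z : walk_to n y -> adj ES y z -> walk_to n.+1 z.
Proof.
move=> /walk_toP[s [sn s_path s_last]] yz; apply/walk_toP; exists (rcons s z).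
by rewrite size_rcons sn rcons_path s_path s_last yz last_rcons.
Qed.

Lemma walk_toSE n z : walk_to n.+1 z -> exists2 y, walk_to n y & adj ES y z.
Proof.
move=> /walk_toP[s []]; case/lastP: s => [|s a] //.
rewrite size_rcons rcons_path last_rcons => -[sn] /andP[s_path sa] <-.
by exists (last vi s) => //; apply/walk_toP; exists s.
Qed.

(* Breadth-first depth from [vi]; junk outside [VS]. *)
Definition depth x := find (walk_to ^~ x) (iota 0 #|V|).

Lemma depth_spec x : x \in VS -> (depth x < #|V|)%N /\ walk_to (depth x) x.
Proof.
move=> xVS.
have has_walk : has (walk_to ^~ x) (iota 0 #|V|).
  have /connectP[s s_path s_last] := VS_connected vi_in xVS.
  case/shortenP: s_path s_last => s' s'_path s'_uniq _ s'_last.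
  apply/hasP; exists (size s'); last by apply/walk_toP; exists s'.
  by rewrite mem_iota /=; have := max_card (mem (vi :: s')); rewrite (card_uniqP s'_uniq).
have ltV : (depth x < #|V|)%N by rewrite -[#|V|](size_iota 0) -has_find.
by split=> //; have := nth_find 0 has_walk; rewrite nth_iota.
Qed.

Lemma before_depth x n : (n < depth x)%N -> ~~ walk_to n x.
Proof.
move=> n_lt; have := before_find 0 n_lt; rewrite nth_iota ?add0n => [->//|].
by apply: leq_trans n_lt _; rewrite -[#|V|](size_iota 0) find_size.
Qed.

Lemma depth_root : depth vi = 0%N.
Proof.
by apply/eqP; rewrite -leqn0 leqNgt; apply/negP => /before_depth; rewrite walk_to0 eqxx.
Qed.

Lemma depth_eq0 x : x \in VS -> depth x = 0%N -> x = vi.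
Proof. by move=> xVS d0; have [_] := depth_spec xVS; rewrite d0 walk_to0 => /eqP. Qed.

Lemma depth_adj y z : adj ES y z -> (depth z <= (depth y).+1)%N.
Proof.
move=> yz; have /andP[yVS _] := adj_in yz; have [_ y_walk] := depth_spec yVS.
by rewrite leqNgt; apply/negP => /before_depth/negP; apply; apply: walk_toS yz.
Qed.

Lemma exists_parent x : x \in VS -> x != vi ->
  exists2 y, adj ES y x & depth y = (depth x).-1.
Proof.
move=> xVS x_nonroot; have [_] := depth_spec xVS.
case d_x : (depth x) => [|d]; first by move: x_nonroot; rewrite (depth_eq0 xVS d_x) eqxx.
move=> /walk_toSE[y y_walk yx]; exists y => //=.
have /andP[yVS _] := adj_in yx; have := depth_adj yx; rewrite d_x ltnS => le_d.
by apply/eqP; rewrite eqn_leq le_d andbT leqNgt; apply/negP => /before_depth/negP.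
Qed.

Definition parent x :=
  odflt x [pick y | adj ES y x && (depth y == (depth x).-1)].

Lemma parent_spec x : x \in VS -> x != vi ->
  adj ES (parent x) x /\ depth (parent x) = (depth x).-1.
Proof.
move=> xVS x_nonroot; rewrite /parent; case: pickP => [y /andP[yx /eqP]//|none].
have [y yx d_y] := exists_parent xVS x_nonroot.
by have := none y; rewrite yx d_y eqxx.
Qed.

Lemma parent_root : parent vi = vi.
Proof.
rewrite /parent; case: pickP => [y /andP[yvi /eqP]|//].
have /andP[yVS _] := adj_in yvi; rewrite depth_root => /(depth_eq0 yVS) y_root.
by move: (adj_neq yvi); rewrite y_root eqxx.
Qed.

Lemma parent_in x : x \in VS -> parent x \in VS.
Proof.
move=> xVS; have [->|x_nonroot] := eqVneq x vi; first by rewrite parent_root.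
by have [/adj_in/andP[]] := parent_spec xVS x_nonroot.
Qed.

Lemma depth_parent x : x \in VS -> depth (parent x) = (depth x).-1.
Proof.
move=> xVS; have [->|x_nonroot] := eqVneq x vi; first by rewrite parent_root depth_root.
by have [] := parent_spec xVS x_nonroot.
Qed.

Definition anc k x := iter k parent x.

Lemma ancD i j x : anc (i + j) x = anc i (anc j x).
Proof. exact: iterD. Qed.

Lemma ancS k x : anc k.+1 x = parent (anc k x).
Proof. by []. Qed.

Lemma anc_in k x : x \in VS -> anc k x \in VS.
Proof. by move=> xVS; elim: k => //= k; apply: parent_in. Qed.

Lemma depth_anc k x : x \in VS -> depth (anc k x) = (depth x - k)%N.
Proof.
move=> xVS; elim: k => [|k IH]; first by rewrite subn0.
by rewrite ancS depth_parent ?anc_in // IH subnS.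
Qed.

Lemma anc_depth x : x \in VS -> anc (depth x) x = vi.
Proof. by move=> xVS; apply: depth_eq0; rewrite ?anc_in ?depth_anc ?subnn. Qed.

Lemma anc_inj x i j : x \in VS -> (i <= depth x)%N -> (j <= depth x)%N ->
  anc i x = anc j x -> i = j.
Proof. by move=> xVS ix jx /(congr1 depth); rewrite !depth_anc //; lia. Qed.

Definition nonroot := VS :\ vi.
Definition pedge x := [set x; parent x].

Lemma nonroot_in x : x \in nonroot -> x \in VS.
Proof. by case/setD1P. Qed.

Lemma depth_gt0 x : x \in nonroot -> (0 < depth x)%N.
Proof.
case/setD1P=> x_nonroot xVS; rewrite lt0n.
by apply: contra_neq x_nonroot => /(depth_eq0 xVS).
Qed.

Lemma depth_parent_lt x : x \in nonroot -> (depth (parent x) < depth x)%N.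
Proof.
by move=> x_nr; rewrite depth_parent ?nonroot_in //; have := depth_gt0 x_nr; lia.
Qed.

Lemma anc_nonroot k x : x \in VS -> (k < depth x)%N -> anc k x \in nonroot.
Proof.
move=> xVS kx; rewrite in_setD1 anc_in // andbT.
by apply/eqP => /(congr1 depth); rewrite depth_anc // depth_root; lia.
Qed.

Lemma pedge_in x : x \in nonroot -> pedge x \in ES.
Proof.
by case/setD1P=> x_nonroot xVS; have [] := parent_spec xVS x_nonroot; rewrite /adj setUC.
Qed.

Lemma pedge_inj : {in nonroot &, injective pedge}.
Proof.
move=> x y x_nr y_nr exy.
have : x \in pedge y by rewrite -exy set21.
have : y \in pedge x by rewrite exy set21.
rewrite !inE => /orP[/eqP//|/eqP y_px] /orP[/eqP//|/eqP x_py].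
have := depth_parent_lt x_nr; have := depth_parent_lt y_nr.
by rewrite -x_py -y_px; lia.
Qed.

(* The child of the root on the path from [x] to the root. *)
Definition branch x := anc (depth x).-1 x.

Lemma branch_anc x i : x \in VS -> (i < depth x)%N -> branch (anc i x) = branch x.
Proof. by move=> xVS ix; rewrite /branch depth_anc // -ancD; congr anc; lia. Qed.

Lemma branch_parent x : x \in nonroot -> parent x != vi -> branch (parent x) = branch x.
Proof.
move=> x_nr px_nonroot; have xVS := nonroot_in x_nr.
have := depth_gt0 (x := parent x); rewrite in_setD1 px_nonroot parent_in // depth_parent //.
by move=> /(_ isT) d_x; rewrite -(branch_anc (x := x) (i := 1)) //; lia.
Qed.

Lemma branch_nonroot x : x \in nonroot -> branch x \in nonroot.
Proof. by move=> x_nr; apply: anc_nonroot; rewrite ?nonroot_in // prednK ?depth_gt0. Qed.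

Lemma parent_branch x : x \in nonroot -> parent (branch x) = vi.
Proof.
by move=> x_nr; rewrite -ancS prednK ?depth_gt0 // anc_depth ?nonroot_in.
Qed.

Lemma adj_pedge (W : {set V}) a b : adj (pedge @: W) a b ->
  (a \in W /\ b = parent a) \/ (b \in W /\ a = parent b).
Proof.
by case/imsetP=> u uW /set2_eq_cases[[-> ->]|[-> ->]]; [left | right].
Qed.

Lemma adj_pedge_deeper (W : {set V}) z a : W \subset nonroot ->
  adj (pedge @: W) z a -> (depth a <= depth z)%N -> a = parent z.
Proof.
move=> /subsetP W_nr /adj_pedge[[_ //]|[aW ->]].
by have := depth_parent_lt (W_nr a aW); rewrite ltnNge => /negbTE->.
Qed.

(* In a cycle, a deepest vertex would have its parent as both neighbours. *)
Lemma pedge_acyclic (W : {set V}) : W \subset nonroot -> ~ has_cycle (pedge @: W).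
Proof.
move=> W_nr [x [s [s2 s_uniq s_path closing]]].
have s_cycle : cycle (adj (pedge @: W)) (x :: s) by rewrite /= rcons_path s_path.
case: (arg_maxnP depth (mem_head x s)) => z z_in z_max.
case: (rot_to z_in) => i s' rot_s.
have : cycle (adj (pedge @: W)) (z :: s') by rewrite -rot_s rot_cycle.
have : uniq (z :: s') by rewrite -rot_s rot_uniq.
have : size s' = size s by move: (congr1 size rot_s); rewrite size_rot => -[].
have s'_sub : {subset z :: s' <= x :: s} by move=> v; rewrite -rot_s mem_rot.
clear rot_s.
case: s' s'_sub => [|a s'] s'_sub s'_size; first by rewrite -s'_size in s2.
rewrite /= rcons_path => /and3P[_ a_notin _] /and3P[za _ bz].
set b := last a s' in bz; rewrite adjC in bz.
have b_in : b \in s'.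
  by rewrite /b -nth_last mem_nth // ltn_predL; move: s'_size s2 => /= <-.
have a_max : (depth a <= depth z)%N by apply/z_max/s'_sub; rewrite !inE eqxx orbT.
have b_max : (depth b <= depth z)%N by apply/z_max/s'_sub; rewrite !inE b_in !orbT.
move: a_notin; rewrite (adj_pedge_deeper W_nr za a_max).
by rewrite -(adj_pedge_deeper W_nr bz b_max) b_in.
Qed.

Lemma parent_closed_connect (W : {set V}) : W \subset VS ->
  {in W :\ vi, forall x, parent x \in W} ->
  forall x, x \in W -> connect (adj (pedge @: (W :\ vi))) x vi.
Proof.
move=> /subsetP W_VS W_closed x; elim: {x}(depth x) {-2}x (leqnn (depth x)) => [|n IH] x.
  by move=> d0 xW; rewrite (depth_eq0 (W_VS x xW)) //; lia.
move=> dx xW; have [->|x_nonroot] := eqVneq x vi; first exact: connect0.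
have xW' : x \in W :\ vi by rewrite in_setD1 x_nonroot.
apply: connect_trans (connect1 _) (IH _ _ (W_closed x xW')); first exact: imset_f.
have : x \in nonroot by rewrite in_setD1 x_nonroot W_VS.
by move/depth_parent_lt; lia.
Qed.

(** * Optimality: every branch carries a terminal *)

Variable E : {set {set V}}.
Hypothesis ES_sub_E : ES \subset E.

Lemma parent_closed_tree (W : {set V}) : vi \in W -> W \subset VS ->
  {in W :\ vi, forall x, parent x \in W} -> is_tree E W (pedge @: (W :\ vi)).
Proof.
move=> viW W_VS W_closed.
have W_nr : W :\ vi \subset nonroot by apply: setSD.
split.
- apply/subsetP => _ /imsetP[x xW ->]; apply: (subsetP ES_sub_E).
  exact/pedge_in/(subsetP W_nr).
- move=> _ /imsetP[x xW ->]; apply/subsetP => v /set2P[]->; last exact: W_closed.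
  by case/setD1P: xW.
- by apply/set0Pn; exists vi.
- move=> u w uW wW; have conn := parent_closed_connect W_VS W_closed.
  apply: connect_trans (conn u uW) _.
  by rewrite (sym_connect_sym (adjC _)) conn.
- exact: pedge_acyclic.
Qed.

Variables (c : {set V} -> rat) (p : V -> rat).
Hypothesis c_pos : forall e, e \in E -> 0 < c e.
Hypothesis p_ge0 : forall v, 0 <= p v.

Lemma Cost_parent_tree (W : {set V}) : W \subset VS ->
  Cost c p W (pedge @: (W :\ vi)) = \sum_(x in W :\ vi) c (pedge x) + \sum_(v in ~: W) p v.
Proof.
move=> W_VS; rewrite /Cost big_imset // => x y /(subsetP (setSD _ W_VS)) x_nr.
by move/(subsetP (setSD _ W_VS)); apply: pedge_inj.
Qed.

Lemma c_pedge_gt0 x : x \in nonroot -> 0 < c (pedge x).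
Proof. by move=> x_nr; apply/c_pos/(subsetP ES_sub_E)/pedge_in. Qed.

Lemma Cost_ge_pedges :
  \sum_(x in nonroot) c (pedge x) + \sum_(v in ~: VS) p v <= Cost c p VS ES.
Proof.
rewrite /Cost lerD2r -(big_imset _ pedge_inj); apply: ler_sum_subset.
  by apply/subsetP => _ /imsetP[x x_nr ->]; apply: pedge_in.
by move=> e /(subsetP ES_sub_E) /c_pos /ltW.
Qed.

Hypothesis ES_optimal : forall VS' ES', is_tree E VS' ES' -> Cost c p VS ES <= Cost c p VS' ES'.

(* Otherwise cutting off the branch of [y] would be a strictly cheaper tree. *)
Lemma branch_has_terminal y : y \in nonroot -> parent y = vi ->
  exists t, [/\ t \in Tp p, t \in nonroot & branch t = y].
Proof.
move=> y_nr y_child.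
have [/existsP[t /and3P[tT t_nr /eqP <-]]|no_terminal] :=
  boolP [exists t, [&& t \in Tp p, t \in nonroot & branch t == y]]; first by exists t.
pose B := [set x in nonroot | branch x == y]; pose W := VS :\: B.
have B_p0 x : x \in B -> p x = 0.
  rewrite inE => /andP[x_nr /eqP x_y]; apply/eqP; rewrite eq_le p_ge0 andbT leNgt.
  apply: contra no_terminal => xT; apply/existsP; exists x.
  by rewrite inE xT x_nr x_y eqxx.
have y_depth : depth y = 1%N.
  have := depth_parent (nonroot_in y_nr); rewrite y_child depth_root.
  by have := depth_gt0 y_nr; lia.
have yB : y \in B by rewrite inE y_nr /branch y_depth eqxx.
have W_VS : W \subset VS by apply: subsetDl.
have W_nr : W :\ vi = nonroot :\: B.
  by apply/setP => x; rewrite !inE; case: (x \in VS) (x != vi) (branch x == y) => [] [] [].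
have viW : vi \in W by rewrite inE vi_in andbT inE in_setD1 eqxx.
have W_closed : {in W :\ vi, forall x, parent x \in W}.
  move=> x; rewrite W_nr => /setDP[x_nr xB].
  have [->//|px_nonroot] := eqVneq (parent x) vi.
  rewrite inE parent_in ?nonroot_in // andbT inE in_setD1 px_nonroot parent_in ?nonroot_in //=.
  by rewrite branch_parent //; move: xB; rewrite inE x_nr.
suff : Cost c p W (pedge @: (W :\ vi)) < Cost c p VS ES.
  by rewrite ltNge ES_optimal //; apply: parent_closed_tree.
rewrite Cost_parent_tree //; apply: lt_le_trans Cost_ge_pedges.
have -> : \sum_(v in ~: W) p v = \sum_(v in ~: VS) p v.
  rewrite (big_setID B) /= big1 ?add0r => [|v /setIP[_]]; last exact: B_p0.
  apply: eq_bigl => v; rewrite !(in_setC, in_setD).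
  case vB : (v \in B); last by case: (v \in VS).
  by move: vB; rewrite inE => /andP[/nonroot_in ->].
have B_nr : B \subset nonroot by apply/subsetP => v; rewrite inE => /andP[].
rewrite ltrD2r W_nr [X in _ < X](big_setID B) /= ltrDr (setIidPr B_nr).
rewrite (bigD1 y) //= ltr_pwDl ?c_pedge_gt0 //.
by apply: sumr_ge0 => v /andP[/(subsetP B_nr) v_nr _]; apply/ltW/c_pedge_gt0.
Qed.


(** * Charging terminals to disjoint tree paths *)

Variable H : V -> {set V}.
Hypothesis region_uniq : forall v t t', t \in Tp p -> t' \in Tp p ->
  v \in H t -> v \in H t' -> t = t'.
Hypothesis region_self : forall t, t \in Tp p -> t \in H t.
Hypothesis region_terminal : forall t x, t \in Tp p -> x \in Tp p -> x \in H t -> x = t.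
Hypothesis vi_nonterminal : vi \notin Tp p.

Lemma terminal_nonroot t : t \in Tp p -> t \in VS -> t \in nonroot.
Proof. by move=> tT tVS; rewrite in_setD1 tVS andbT; apply: contraNneq vi_nonterminal => <-. Qed.

(* Number of steps towards the root along which [t] stays in its own region. *)
Definition exit_index t := find (fun i => anc i.+1 t \notin H t) (iota 0 (depth t)).

Lemma exit_index_le t : (exit_index t <= depth t)%N.
Proof. by rewrite -[depth t](size_iota 0) find_size. Qed.

Lemma anc_in_region t i : t \in Tp p -> (i <= exit_index t)%N -> anc i t \in H t.
Proof.
case: i => [|i] tT; first by move=> _; apply: region_self.
move=> lt_i; have := before_find 0 lt_i.
by rewrite nth_iota ?add0n => [/negbFE//|]; apply: leq_trans lt_i (exit_index_le t).
Qed.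

Lemma anc_exit_notin t : (exit_index t < depth t)%N -> anc (exit_index t).+1 t \notin H t.
Proof.
move=> lt_exit; have has_exit : has (fun i => anc i.+1 t \notin H t) (iota 0 (depth t)).
  by rewrite has_find size_iota.
by have := nth_find 0 has_exit; rewrite nth_iota.
Qed.

Definition exit_depth t := (depth t - exit_index t)%N.

Definition in_branch y t := [&& t \in Tp p, t \in nonroot & branch t == y].

(* The terminal of a branch whose region reaches closest to the root. *)
Definition rep y := odflt y
  [pick t | in_branch y t && [forall t', in_branch y t' ==> (exit_depth t <= exit_depth t')%N]].

Definition children := [set y in nonroot | parent y == vi].

Definition reps := rep @: children.

Lemma children_branch x : x \in nonroot -> branch x \in children.
Proof. by move=> x_nr; rewrite inE branch_nonroot // parent_branch ?eqxx. Qed.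

Lemma rep_spec y : y \in children -> in_branch y (rep y) /\
  forall t, in_branch y t -> (exit_depth (rep y) <= exit_depth t)%N.
Proof.
rewrite inE => /andP[y_nr /eqP y_child].
have [t0 [t0T t0_nr t0_y]] := branch_has_terminal y_nr y_child.
have t0_in : in_branch y t0 by rewrite /in_branch t0T t0_nr t0_y eqxx.
rewrite /rep; case: pickP => [t /andP[t_in /forallP t_min]|none].
  by split=> // t' t'_in; have := t_min t'; rewrite t'_in.
case: (arg_minnP exit_depth t0_in) => t t_in t_min; have := none t.
by rewrite t_in; move/negP; case; apply/forallP => t'; apply/implyP/t_min.
Qed.

Lemma reps_terminal u : u \in reps -> u \in Tp p /\ u \in nonroot.
Proof. by case/imsetP=> y /rep_spec[/and3P[]] *; subst. Qed.

Lemma rep_branch u : u \in reps -> rep (branch u) = u /\ branch u \in children.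
Proof.
by case/imsetP=> y y_child ->; have [/and3P[_ _ /eqP ->] _] := rep_spec y_child.
Qed.

Lemma rep_min u t : u \in reps -> t \in Tp p -> t \in nonroot -> branch t = branch u ->
  (exit_depth u <= exit_depth t)%N.
Proof.
move=> /rep_branch[u_rep u_child] tT t_nr t_u; have [_ u_min] := rep_spec u_child.
by rewrite -{1}u_rep u_min // /in_branch tT t_nr t_u eqxx.
Qed.

Lemma reps_branch_inj : {in reps &, injective branch}.
Proof. by move=> u u' /rep_branch[ru _] /rep_branch[ru' _] eq_b; rewrite -ru -ru' eq_b. Qed.

Lemma root_in_region t : t \in Tp p -> t \in nonroot -> exit_index t = depth t -> vi \in H t.
Proof. by move=> tT t_nr t_exit; rewrite -(anc_depth (nonroot_in t_nr)) anc_in_region ?t_exit. Qed.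

(* Otherwise [t] and the representative of its branch would both contain [vi]
   in their regions. *)
Lemma exit_index_lt t : t \in Tp p -> t \in nonroot -> t \notin reps ->
  (exit_index t < depth t)%N.
Proof.
move=> tT t_nr t_nrep; rewrite ltn_neqAle exit_index_le andbT.
apply: contra t_nrep => /eqP t_exit.
have [/and3P[uT u_nr _] u_min] := rep_spec (children_branch t_nr).
have u_exit : exit_index (rep (branch t)) = depth (rep (branch t)).
  have := u_min t; rewrite /in_branch tT t_nr eqxx /exit_depth t_exit subnn => /(_ isT).
  by have := exit_index_le (rep (branch t)); lia.
have := region_uniq uT tT (root_in_region uT u_nr u_exit) (root_in_region tT t_nr t_exit).
by move <-; apply/imset_f/children_branch.
Qed.

Lemma anc_rep_nonterminal u j : u \in reps -> (0 < j < depth u)%N -> anc j u \notin Tp p.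
Proof.
move=> u_rep /andP[j_gt0 j_lt]; have [uT u_nr] := reps_terminal u_rep.
have uVS := nonroot_in u_nr; apply/negP => xT.
have := rep_min u_rep xT (anc_nonroot uVS j_lt) (branch_anc uVS j_lt).
have exit_lt : (exit_index u < j)%N.
  rewrite ltnNge; apply/negP => j_le.
  have /(anc_inj uVS (ltnW j_lt) (leq0n _)) := region_terminal uT xT (anc_in_region uT j_le).
  by move: j_gt0; case: j {j_lt j_le xT}.
by rewrite /exit_depth depth_anc //; lia.
Qed.

(* The parent edges charged to a terminal [t] of the tree: the whole path to
   the root for a representative, the path until it leaves [H t] otherwise. *)
Definition charge_len t := if t \in reps then depth t else (exit_index t).+1.

Definition charged t :=
  if (t \in Tp p) && (t \in VS) then [set anc i t | i : 'I_(charge_len t)] else set0.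

Lemma charge_len_le t : t \in Tp p -> t \in nonroot -> (charge_len t <= depth t)%N.
Proof. by move=> tT t_nr; rewrite /charge_len; case: ifPn => // /(exit_index_lt tT t_nr). Qed.

Lemma mem_charged t x : x \in charged t ->
  [/\ t \in Tp p, t \in nonroot & exists2 i, (i < charge_len t)%N & x = anc i t].
Proof.
rewrite /charged; case: ifP => [/andP[tT tVS]|_]; last by rewrite inE.
by case/imsetP=> i _ ->; split; rewrite ?terminal_nonroot //; exists i.
Qed.

Lemma charged_nonroot t : charged t \subset nonroot.
Proof.
apply/subsetP => x /mem_charged[tT t_nr [i i_lt ->]].
exact: anc_nonroot (nonroot_in t_nr) (leq_trans i_lt (charge_len_le tT t_nr)).
Qed.

Lemma sum_charged t : t \in Tp p -> t \in VS ->
  \sum_(x in charged t) c (pedge x) = \sum_(i < charge_len t) c (pedge (anc i t)).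
Proof.
move=> tT tVS; have t_len := charge_len_le tT (terminal_nonroot tT tVS).
rewrite /charged tT tVS big_imset //= => i j _ _ /anc_inj eq_ij; apply/val_inj/eq_ij => //.
  exact/ltnW/(leq_trans (ltn_ord i)).
exact/ltnW/(leq_trans (ltn_ord j)).
Qed.

(* The shared vertex lies above the exit point of [a], hence above that of
   [b], where the path charged to [b] already stops. *)
Lemma charged_rep_nonrep a b i j : a \in reps -> b \in Tp p -> b \in nonroot -> a != b ->
  (i < depth a)%N -> (j <= exit_index b)%N -> anc i a = anc j b -> False.
Proof.
move=> a_rep bT b_nr ab i_lt j_le eq_ij; have [aT a_nr] := reps_terminal a_rep.
have [aVS bVS] := (nonroot_in a_nr, nonroot_in b_nr).
have j_lt : (j < depth b)%N.
  by have := congr1 depth eq_ij; rewrite !depth_anc //; have := exit_index_le b; lia.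
have := rep_min a_rep bT b_nr; rewrite -(branch_anc aVS i_lt) eq_ij branch_anc // => /(_ erefl).
have exit_lt : (exit_index a < i)%N.
  rewrite ltnNge; apply/negP => i_le; move/eqP: ab; apply.
  by apply: (region_uniq aT bT (anc_in_region aT i_le)); rewrite eq_ij anc_in_region.
have := congr1 depth eq_ij; rewrite !depth_anc // /exit_depth; lia.
Qed.

Lemma charged_disjoint t t' : t != t' -> [disjoint charged t & charged t'].
Proof.
move=> tt'; apply/pred0P => x /=; apply/negP => /andP[].
move=> /mem_charged[tT t_nr [i i_lt ->]] /mem_charged[t'T t'_nr [j j_lt eq_ij]].
have [tVS t'VS] := (nonroot_in t_nr, nonroot_in t'_nr).
have i_depth := leq_trans i_lt (charge_len_le tT t_nr).
have j_depth := leq_trans j_lt (charge_len_le t'T t'_nr).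
move: i_lt j_lt; rewrite /charge_len.
case: ifPn => t_rep; case: ifPn => t'_rep i_lt j_lt.
- move/eqP: tt'; apply; apply: reps_branch_inj => //.
  by rewrite -(branch_anc tVS i_depth) eq_ij branch_anc.
- exact: charged_rep_nonrep t_rep t'T t'_nr tt' i_lt j_lt eq_ij.
- by apply: charged_rep_nonrep t'_rep tT t_nr _ j_lt i_lt (esym eq_ij); rewrite eq_sym.
- move/eqP: tt'; apply; apply: (region_uniq tT t'T (anc_in_region tT i_lt)).
  by rewrite eq_ij anc_in_region.
Qed.

Definition root_path_cost t := \sum_(i < depth t) c (pedge (anc i t)).

Lemma adj_E_parent x : x \in nonroot -> adj E x (parent x).
Proof. by move=> /pedge_in /(subsetP ES_sub_E). Qed.

Lemma rpc_le_exit_run t : t \in Tp p -> t \in nonroot -> (exit_index t < depth t)%N ->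
  rpc E c p H t <= \sum_(i < (exit_index t).+1) c (pedge (anc i t)).
Proof.
move=> tT t_nr exit_lt; have tVS := nonroot_in t_nr.
apply: (rpc_le_dG p (anc_exit_notin exit_lt)).
apply: (@dist_in_walk _ E c setT (anc ^~ t)) => [i _ | i i_lt | i j i_le j_le]; rewrite ?inE //.
  by apply/adj_E_parent/anc_nonroot => //; exact: leq_trans i_lt exit_lt.
by apply: anc_inj => //; [apply: leq_trans i_le exit_lt | apply: leq_trans j_le exit_lt].
Qed.

(* Read downwards from the root, the path to a representative meets no
   terminal before its end. *)
Lemma dlow_rep_le u : u \in reps -> ele (dlow E c p vi u) (Some (root_path_cost u)).
Proof.
move=> u_rep; have [uT u_nr] := reps_terminal u_rep; have uVS := nonroot_in u_nr.
set d := depth u; pose w i := anc (d - i) u.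
have w_parent i : (i < d)%N -> w i = parent (w i.+1) by move=> i_lt; rewrite /w -ancS subnSK.
have w0 : w 0%N = vi by rewrite /w subn0 anc_depth.
have wd : w d = u by rewrite /w subnn.
set A := [set x | (x \notin Tp p) || (x == vi) || (x == u)].
have w_in i : (i <= d)%N -> w i \in A.
  move=> i_le; rewrite inE /w; case: (posnP i) => [->|i_gt0].
    by rewrite subn0 anc_depth // eqxx orbT.
  have [-> | i_lt] := eqVneq i d; first by rewrite subnn eqxx !orbT.
  by rewrite anc_rep_nonterminal //; apply/andP; split; lia.
have w_adj i : (i < d)%N -> adj E (w i) (w i.+1).
  move=> i_lt; rewrite w_parent // adjC; apply: adj_E_parent.
  by rewrite /w; apply: anc_nonroot => //; lia.
have w_inj i j : (i <= d)%N -> (j <= d)%N -> w i = w j -> i = j.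
  by move=> i_le j_le /(anc_inj uVS (leq_subr _ _) (leq_subr _ _)); lia.
have := dist_in_walk c w_in w_adj w_inj; rewrite w0 wd => /ele_trans; apply => /=.
rewrite le_eqVlt; apply/orP; left; apply/eqP.
rewrite (reindex_inj rev_ord_inj) /=; apply: eq_bigr => i _.
rewrite w_parent ?rev_ord_proof // setUC -/(pedge _); congr (c (pedge _)).
by rewrite /w /= subnSK // subKn // ltnW.
Qed.

Lemma deg_root_le : (deg ES vi <= #|children|)%N.
Proof.
apply: leq_trans (leq_imset_card pedge children); apply: subset_leq_card.
apply/subsetP => e; rewrite inE => /andP[eES vi_e].
have /cards2P[a [b [_ e_ab]]] : #|e| == 2%N by rewrite ES_card2.
have [w e_w] : exists w, e = [set vi; w].
  by move: vi_e; rewrite e_ab => /set2P[] ->; [exists b | exists a; rewrite setUC].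
have vi_w : adj ES vi w by move: eES; rewrite e_w.
have w_nr : w \in nonroot.
  by rewrite in_setD1 eq_sym adj_neq //=; case/andP: (adj_in vi_w).
have w_child : parent w = vi.
  apply: depth_eq0; first exact/parent_in/nonroot_in.
  by rewrite depth_parent ?nonroot_in //; have := depth_adj vi_w; rewrite depth_root; lia.
apply/imsetP; exists w; first by rewrite inE w_nr w_child eqxx.
by rewrite e_w /pedge w_child setUC.
Qed.

Lemma card_reps : #|reps| = #|children|.
Proof.
apply: card_in_imset => y y' /rep_spec[/and3P[_ _ /eqP y_br] _].
by move=> /rep_spec[/and3P[_ _ /eqP y'_br] _] eq_rep; rewrite -y_br -y'_br eq_rep.
Qed.

Lemma run_le_root_path_cost t k : t \in nonroot -> (k <= depth t)%N ->
  \sum_(i < k) c (pedge (anc i t)) <= root_path_cost t.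
Proof.
move=> t_nr k_le; rewrite /root_path_cost (big_ord_widen _ (fun i => c (pedge (anc i t))) k_le).
rewrite [X in _ <= X](bigID (fun i : 'I__ => (i < k)%N)) /= lerDl.
by apply: sumr_ge0 => i _; apply/ltW/c_pedge_gt0/anc_nonroot; rewrite ?nonroot_in.
Qed.

Variable t0 : V.
Hypothesis t0_terminal : t0 \in Tp p.
Hypothesis vi_in_region : vi \in H t0.

(* A representative other than [t0] leaves its region before the root, so its
   region radius is paid by its path to the root. *)
Lemma charged_cost_ge (R : {set V}) t : R \subset reps -> (t0 \in reps -> t0 \in R) ->
  t \in Tp p -> t \in VS ->
  (if t \in R then root_path_cost t else rpc E c p H t) <= \sum_(x in charged t) c (pedge x).
Proof.
move=> R_reps t0_R tT tVS; have t_nr := terminal_nonroot tT tVS.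
rewrite sum_charged // /charge_len; case: ifPn => [/(subsetP R_reps)->|tR]; first exact: lexx.
case: ifPn => t_rep; last by apply: rpc_le_exit_run => //; apply: exit_index_lt.
have exit_lt : (exit_index t < depth t)%N.
  rewrite ltn_neqAle exit_index_le andbT; apply/negP => /eqP/(root_in_region tT t_nr).
  move/(region_uniq t0_terminal tT vi_in_region) => t0_t.
  by move: tR; rewrite -t0_t t0_R // t0_t.
exact: le_trans (rpc_le_exit_run tT t_nr exit_lt) (run_le_root_path_cost t_nr exit_lt).
Qed.

Lemma Cost_ge_charges (R : {set V}) : R \subset reps -> (t0 \in reps -> t0 \in R) ->
  \sum_(t in R) root_path_cost t + \sum_(t in Tp p :\: R) rpc E c p H t <= Cost c p VS ES.
Proof.
move=> R_reps t0_R; have R_sub : R \subset Tp p :&: VS.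
  apply/subsetP => t /(subsetP R_reps)/reps_terminal[tT /nonroot_in tVS].
  by rewrite inE tT tVS.
pose g t := if t \in R then root_path_cost t else rpc E c p H t.
have -> : \sum_(t in R) root_path_cost t + \sum_(t in Tp p :\: R) rpc E c p H t =
          \sum_(t in Tp p :&: VS) g t + \sum_(t in Tp p :\: VS) g t.
  rewrite -big_setID (big_setID R) /= (setIidPr (subset_trans R_sub (subsetIl _ _))).
  congr (_ + _); apply: eq_bigr => t; rewrite /g; first by move->.
  by case/setDP=> _ /negbTE->.
apply: le_trans Cost_ge_pedges; apply: lerD.
  apply: le_trans (_ : _ <= \sum_t \sum_(x in charged t) c (pedge x)) _.
    rewrite [X in _ <= X](bigID (mem (Tp p :&: VS))) /= [X in _ <= _ + X]big1 ?addr0.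
      by apply: ler_sum => t /setIP[tT tVS]; apply: charged_cost_ge.
    by move=> t; rewrite /charged inE => /negbTE->; rewrite big_set0.
  rewrite -partition_disjoint_bigcup; last exact: charged_disjoint.
  apply: ler_sum_subset; first by apply/bigcupsP => t _; apply: charged_nonroot.
  by move=> x /c_pedge_gt0/ltW.
apply: le_trans (ler_sum_subset (B := ~: VS) _ _); last by move=> v _; apply: p_ge0.
  apply: ler_sum => t /setDP[_ tVS]; rewrite /g ifN; first exact: rpc_le_p.
  by apply: contra tVS => /(subsetP R_sub)/setIP[].
by apply/subsetP => t /setDP[_]; rewrite inE.
Qed.

Lemma Cost_lower_bound : (3 <= deg ES vi)%N -> exists R : {set V},
  [/\ R \subset Tp p, #|R| = 3%N,
      forall t, t \in R -> ele (dlow E c p vi t) (Some (root_path_cost t)) &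
      \sum_(t in R) root_path_cost t + \sum_(t in Tp p :\: R) rpc E c p H t <= Cost c p VS ES].
Proof.
move=> deg3; have reps3 : (0 < 3 <= #|reps|)%N by rewrite card_reps (leq_trans deg3 deg_root_le).
have [R [R_reps R3 t0_R]] := exists_subset_card_mem t0 reps3.
exists R; split => //; last exact: Cost_ge_charges.
  by apply/subsetP => t /(subsetP R_reps) /reps_terminal[].
by move=> t /(subsetP R_reps) /dlow_rep_le.
Qed.

End RootedTree.

Section TerminalRegions.
Variables (V : finType) (E : {set {set V}}) (p : V -> rat) (H : V -> {set V}).
Hypothesis H_trd : is_trd E p H.

Lemma trd_uniq v t t' : t \in Tp p -> t' \in Tp p -> v \in H t -> v \in H t' -> t = t'.
Proof.
case: H_trd => partition _ _ tT t'T vt vt'; have [t1 [_ _ uniq_t]] := partition v.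
by rewrite (uniq_t t tT vt) (uniq_t t' t'T vt').
Qed.

Lemma trd_self t : t \in Tp p -> t \in H t.
Proof.
by case: H_trd => _ terminal _ tT; have /setIP[] : t \in H t :&: Tp p by rewrite terminal ?set11.
Qed.

Lemma trd_terminal t x : t \in Tp p -> x \in Tp p -> x \in H t -> x = t.
Proof.
case: H_trd => _ terminal _ tT xT xt.
by apply/set1P; rewrite -(terminal t tT) inE xt xT.
Qed.

End TerminalRegions.

Theorem proposition3 (V : finType) (E : {set {set V}}) (c : {set V} -> rat) (p : V -> rat)
  (Hinst : is_pcstp E c p)
  (Hs : (3 <= #|Tp p|)%N)
  (H : V -> {set V}) (HH : is_trd E p H)
  (ts : seq V) (Hts : enumerates (Tp p) ts)
  (Hts_sorted : sorted (fun x y => rpc E c p H x <= rpc E c p H y) ts)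
  (vi : V) (Hvi : vi \notin Tp p)
  (bs : seq V) (Hbs : enumerates (Tp p) bs)
  (Hbs_sorted : sorted (fun x y => ele (dlow E c p vi x) (dlow E c p vi y)) bs)
  (VS : {set V}) (ES : {set {set V}}) (Hopt : optimal E c p VS ES)
  (Hdeg : (3 <= deg ES vi)%N) :
  ele (eadd (eadd (eadd (dlow E c p vi (nth vi bs 0)) (dlow E c p vi (nth vi bs 1)))
                  (dlow E c p vi (nth vi bs 2)))
            (Some (\sum_(t <- take (#|Tp p| - 3) ts) rpc E c p H t)))
      (Some (Cost c p VS ES)).
Proof.
case: Hinst => E_card2 c_pos p_ge0 _.
case: Hopt => -[ES_sub_E ES_sub_VS _ VS_connected _] ES_optimal.
have ES_card2 e : e \in ES -> #|e| = 2%N by move/(subsetP ES_sub_E)/E_card2.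
have vi_in : vi \in VS.
  have /card_gt0P[e] : (0 < deg ES vi)%N by apply: leq_trans Hdeg.
  by rewrite inE => /andP[/ES_sub_VS/subsetP]; apply.
case: (HH) => /(_ vi) [t0 [t0T vi_t0 _]] _ _.
have [R [RT R3 R_dlow R_cost]] := Cost_lower_bound ES_card2 ES_sub_VS VS_connected vi_in
  ES_sub_E c_pos p_ge0 ES_optimal (trd_uniq HH) (trd_self HH) (trd_terminal HH) Hvi t0T vi_t0 Hdeg.
have dlow_ge0 x : ele (Some 0) (dlow E c p vi x) by apply: dist_in_ge0.
have := big_eadd_take_enumerates_le Hbs Hbs_sorted dlow_ge0 RT R_dlow.
have := sum_take_enumerates_le Hts Hts_sorted RT.
rewrite R3; case: Hbs => /card_uniqP bs_size /eq_card bs_T.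
have : (3 <= size bs)%N by rewrite -bs_size bs_T.
case: bs {Hbs_sorted bs_size bs_T} => [|b0 [|b1 [|b2 bs]]] //= _ rest three.
rewrite take0 !big_cons big_nil in three.
by apply: ele_eadd3 three _; move: rest R_cost; lra.
Qed.
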